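(* Let $E$ be a symmetric operator defined on a dense domain $\mathcal D$ of a Hilbert space $\mathcal H$. Let $\mathbf d=\{d_i\}_{i\in\mathbb N}$ and $\boldsymbol\lambda=\{\lambda_i\}_{i\in\mathbb N}$ be nondecreasing unbounded real sequences with $d_i\ge\lambda_i$ for every $i$. If there exists an orthonormal sequence $\{f_i\}_{i\in\mathbb N}\subset\mathcal D$ such that $\langle Ef_i,f_i\rangle=\lambda_i$ for all $i$, then there exists an orthonormal sequence $\{e_i\}_{i\in\mathbb N}$, each element of which lies in the (algebraic) linear span of $\{f_i\}_{i\in\mathbb N}$, such that $\overline{\operatorname{span}}\{e_i\}=\overline{\operatorname{span}}\{f_i\}$ and $\langle Ee_i,e_i\rangle=d_i$ for all $i\in\mathbb N$.
   Context: $E$ symmetric means $\langle Ef,g\rangle=\langle f,Eg\rangle$ for all $f,g\in\mathcal D$. $\overline{\operatorname{span}}$ is the closed linear span. *)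

From mathcomp Require Import all_boot all_order all_algebra.
From mathcomp Require Import reals complex.
Set Implicit Arguments. Unset Strict Implicit. Unset Printing Implicit Defensive.
Import Order.TTheory GRing.Theory Num.Theory.
Local Open Scope ring_scope.

Section Hilbert.
Variables (R : realType) (V : lmodType R[i]).
Implicit Types (ip : V -> V -> R[i]).

Definition hnorm ip (x : V) : R := Num.sqrt (complex.Re (ip x x)).

Definition hcauchy ip (u : nat -> V) : Prop :=
  forall eps : R, 0 < eps -> exists N : nat,
    forall m n : nat, (N <= m)%N -> (N <= n)%N -> hnorm ip (u m - u n) < eps.

Definition hconverges ip (u : nat -> V) : Prop :=
  exists x : V, forall eps : R, 0 < eps -> exists N : nat,
    forall n : nat, (N <= n)%N -> hnorm ip (u n - x) < eps.

Definition is_hilbert ip : Prop :=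
  [/\ (forall (a : R[i]) (x y z : V), ip (a *: x + y) z = a * ip x z + ip y z),
      (forall x y : V, ip x y = Num.conj (ip y x)),
      (forall x : V, 0 <= ip x x),
      (forall x : V, ip x x = 0 -> x = 0)
    & (forall u : nat -> V, hcauchy ip u -> hconverges ip u)].

Definition dense_subspace ip (D : V -> Prop) : Prop :=
  [/\ D 0,
      (forall (a : R[i]) (x y : V), D x -> D y -> D (a *: x + y))
    & (forall (x : V) (eps : R), 0 < eps -> exists y : V, D y /\ hnorm ip (x - y) < eps)].

Definition symmetric_operator ip (D : V -> Prop) (E : V -> V) : Prop :=
  (forall (a : R[i]) (x y : V), D x -> D y -> E (a *: x + y) = a *: E x + E y) /\
  (forall f g : V, D f -> D g -> ip (E f) g = ip f (E g)).

Definition orthonormal_seq ip (f : nat -> V) : Prop :=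
  forall i j : nat, ip (f i) (f j) = (if i == j then 1 else 0).

Definition in_span (f : nat -> V) (x : V) : Prop :=
  exists (n : nat) (c : nat -> R[i]), x = \sum_(k < n) c k *: f k.

Definition in_cspan ip (f : nat -> V) (x : V) : Prop :=
  forall eps : R, 0 < eps -> exists y : V, in_span f y /\ hnorm ip (x - y) < eps.

End Hilbert.

Definition nondecreasing_seq (R : realType) (u : nat -> R) : Prop :=
  forall i j : nat, (i <= j)%N -> u i <= u j.

Definition unbounded_seq (R : realType) (u : nat -> R) : Prop :=
  forall M : R, exists i : nat, M < u i.

(* For an orthonormal pair (u, v) in the domain, the compression of E to the
   plane span{u, v} is a Hermitian 2x2 matrix, so a unitary change of basis of
   that plane gives u any prescribed diagonal value c between <Eu,u> and <Ev,v>,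
   the other vector receiving the rest of the trace.  Choose a sparse
   subsequence n_j along which lam jumps by more than the accumulated excess
   sum_(i <= n_j) (d_i - lam_i).  Two passes of such rotations, over the
   disjoint pairs (n_2t, n_2t+1) and then (n_2t+1, n_2t+2), move to each n_j
   the total excess of its block (n_j-1, n_j]; a third pass rotates every i of
   the block against n_j, handing it d_i - lam_i.  In each pass index i is no
   longer touched after step i, so the sequences stabilise pointwise, and no
   step mixes indices on both sides of suitable arbitrarily large cut points, so
   the algebraic span is unchanged. *)

From mathcomp Require Import all_boot all_order all_algebra.
From mathcomp Require Import reals complex ring lra zify.
Set Implicit Arguments. Unset Strict Implicit. Unset Printing Implicit Defensive.
Import Order.TTheory GRing.Theory Num.Theory.
Local Open Scope complex_scope.
Local Open Scope ring_scope.

Lemma incr_leq_mono (m : nat -> nat) :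
  (forall j, (m j < m j.+1)%N) -> {mono m : i j / (i <= j)%N}.
Proof. by move=> m_incr; apply: leq_mono; apply: homo_ltn m_incr; apply: ltn_trans. Qed.

Lemma incr_geq (m : nat -> nat) : (forall j, (m j < m j.+1)%N) -> forall j, (j <= m j)%N.
Proof. by move=> m_incr; elim=> // j IH; apply: leq_ltn_trans IH (m_incr j). Qed.

Lemma even_or_odd (j : nat) : exists t, j = (2 * t)%N \/ j = (2 * t).+1.
Proof. by exists j./2; have := odd_double_half j; case: (odd j) => /= h; [right|left]; lia. Qed.

Section Scalars.
Variable R : realType.

Definition orth_phase (z : R[i]) : R[i] := if z == 0 then 1 else 'i * z / `|z|.

Lemma orth_phase_unit (z : R[i]) : orth_phase z * (orth_phase z)^* = 1.
Proof.
rewrite /orth_phase; have [_|z0] := eqVneq z 0; first by rewrite conjC1 mulr1.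
rewrite -normCK normrM normrV ?unitfE ?normr_eq0 // normrM normCi mul1r normr_id.
by rewrite divff ?normr_eq0 // expr1n.
Qed.

Lemma orth_phase_orth (z : R[i]) : (orth_phase z)^* * z + orth_phase z * z^* = 0.
Proof.
rewrite /orth_phase; have [->|z0] := eqVneq z 0; first by rewrite conjC0 !mulr0 addr0.
have nz : `|z| != 0 by rewrite normr_eq0.
by rewrite !rmorphM /= conjCi fmorphV /= conj_normC; field.
Qed.

Lemma conj_RtoC (x : R) : (x%:C)^* = x%:C.
Proof. exact: conjc_real. Qed.

(* For [a = b] this is [0], since [x / 0 = 0]. *)
Definition mix_weight (a b c : R) : R := (c - a) / (b - a).

Lemma mix_weight_itv (a b c : R) : a <= c <= b -> 0 <= mix_weight a b c <= 1.
Proof.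
move=> /andP [ac cb]; rewrite /mix_weight.
have [<-|ab] := eqVneq a b; first by rewrite subrr invr0 mulr0 lexx ler01.
have ba : 0 < b - a by rewrite subr_gt0 lt_neqAle ab (le_trans ac cb).
rewrite divr_ge0 ?subr_ge0 ?(ltW ba) //=; last exact: le_trans ac cb.
by rewrite ler_pdivrMr // mul1r lerD2r.
Qed.

Lemma mix_weightE (a b c : R) : a <= c <= b -> a + mix_weight a b c * (b - a) = c.
Proof.
move=> /andP [ac cb]; rewrite /mix_weight.
have [ab|ab] := eqVneq a b.
  by move: cb; rewrite -ab => ca; rewrite subrr mulr0 addr0; apply/le_anti/andP.
by rewrite divfK ?subr_eq0 1?eq_sym // addrC subrK.
Qed.

(* With [s := mix_weight a b c] and [w := orth_phase z], the unit vector
   [(sqrt (1 - s), sqrt s * w)] has Rayleigh quotient [c] for the Hermitian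
   matrix [[a, z], [z^*, b]]: the phase [w] kills the cross terms. *)
Definition rot_cos (a b c : R) : R[i] := (Num.sqrt (1 - mix_weight a b c))%:C.
Definition rot_sin (a b c : R) (z : R[i]) : R[i] :=
  (Num.sqrt (mix_weight a b c))%:C * orth_phase z.

Section Rotation.
Variables (a b c : R) (z : R[i]).
Hypothesis abc : a <= c <= b.
Let s := mix_weight a b c.
Let x := Num.sqrt (1 - s).
Let y := Num.sqrt s.

Let sqr_sqrt_conj (u : R) : 0 <= u -> (Num.sqrt u)%:C * ((Num.sqrt u)%:C)^* = u%:C.
Proof. by move=> u0; rewrite conj_RtoC -rmorphM /= -expr2 sqr_sqrtr. Qed.

Let x2 : (x%:C) * (x%:C)^* = (1 - s)%:C.
Proof. by have /andP [_ s1] := mix_weight_itv abc; rewrite sqr_sqrt_conj // subr_ge0. Qed.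

Let y2 : (y%:C) * (y%:C)^* = s%:C.
Proof. by have /andP [s0 _] := mix_weight_itv abc; rewrite sqr_sqrt_conj. Qed.

Lemma rot_unitary :
  rot_cos a b c * (rot_cos a b c)^* + rot_sin a b c z * (rot_sin a b c z)^* = 1.
Proof.
rewrite /rot_cos /rot_sin -/s -/x -/y rmorphM /=.
have -> : y%:C * orth_phase z * ((y%:C)^* * (orth_phase z)^*) =
          y%:C * (y%:C)^* * (orth_phase z * (orth_phase z)^*) by ring.
by rewrite x2 y2 orth_phase_unit mulr1 -rmorphD /= subrK.
Qed.

Lemma rot_diag :
  let al := rot_cos a b c in let be := rot_sin a b c z in
  al * al^* * a%:C + al * be^* * z + be * al^* * z^* + be * be^* * b%:C = c%:C.
Proof.
rewrite /rot_cos /rot_sin -/s -/x -/y /=; set w := orth_phase z.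
transitivity (x%:C * x%:C^* * a%:C + y%:C * y%:C^* * (w * w^*) * b%:C
              + (x * y)%:C * (w^* * z + w * z^*)).
  by rewrite !rmorphM /= !conj_RtoC; ring.
rewrite x2 y2 orth_phase_unit orth_phase_orth mulr0 addr0 mulr1.
by rewrite -!rmorphM -rmorphD /= -(mix_weightE abc) -/s; congr (_%:C); ring.
Qed.

End Rotation.
End Scalars.

Section Blocks.
Variable n : nat -> nat.
Hypothesis n_incr : forall j, (n j < n j.+1)%N.

Let n_mono := incr_leq_mono n_incr.

Lemma block_exists t : exists j, (t <= n j)%N.
Proof. by exists t; apply: incr_geq. Qed.

Definition block t := ex_minn (block_exists t).

Definition block_start j := if j is j'.+1 then (n j').+1 else 0%N.

Lemma block_leq t j : (block t <= j)%N = (t <= n j)%N.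
Proof.
rewrite /block; case: ex_minnP => b tb b_min.
by apply/idP/idP => [bj|/b_min //]; apply: leq_trans tb _; rewrite n_mono.
Qed.

Lemma leq_n_block t : (t <= n (block t))%N.
Proof. by rewrite -block_leq. Qed.

Lemma block_n j : block (n j) = j.
Proof. by apply/eqP; rewrite eqn_leq block_leq leqnn -n_mono leq_n_block. Qed.

Lemma block_succ t : t != n (block t) -> block t.+1 = block t.
Proof.
move=> t_end; apply/eqP; rewrite eqn_leq block_leq ltn_neqAle t_end leq_n_block /=.
by rewrite block_leq (leq_trans (leqnSn t)) ?leq_n_block.
Qed.

Lemma block_succ_n j : block (n j).+1 = j.+1.
Proof. by apply/eqP; rewrite eqn_leq block_leq n_incr /= ltnNge block_leq ltnn. Qed.

Lemma notin_range t : t != n (block t) -> forall j, n j != t.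
Proof. by move=> t_end j; apply: contra t_end => /eqP <-; rewrite block_n. Qed.

End Blocks.

Section Excess.
Variables (R : realType) (d lam : nat -> R).

Definition excess k := \sum_(i < k) (d i - lam i).

Lemma excess0 : excess 0 = 0.
Proof. by rewrite /excess big_ord0. Qed.

Lemma excessS k : excess k.+1 = excess k + (d k - lam k).
Proof. by rewrite /excess big_ord_recr. Qed.

Hypothesis lam_le_d : forall i, lam i <= d i.

Lemma excess_mono : {homo excess : i j / (i <= j)%N >-> i <= j}.
Proof. by apply: homo_leq lexx le_trans _ => k; rewrite excessS lerDl subr_ge0. Qed.

Lemma excess_ge0 k : 0 <= excess k.
Proof. by rewrite -excess0 excess_mono. Qed.

End Excess.

Section Sparse.
Variables (R : realType) (lam h : nat -> R).
Hypothesis lam_unb : unbounded_seq lam.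

Fixpoint sparse j : nat :=
  if j is j'.+1 then xchoose (lam_unb (lam (sparse j') + h (sparse j'))) else 0%N.

Lemma sparse_gap j : lam (sparse j) + h (sparse j) < lam (sparse j.+1).
Proof. exact: (xchooseP (lam_unb _)). Qed.

Hypothesis lam_mono : nondecreasing_seq lam.
Hypothesis h_ge0 : forall i, 0 <= h i.

Lemma sparse_incr j : (sparse j < sparse j.+1)%N.
Proof.
rewrite ltnNge; apply/negP => /lam_mono.
by have := sparse_gap j; have := h_ge0 (sparse j); lra.
Qed.

End Sparse.

Section Span.
Variables (R : realType) (V : lmodType R[i]).
Implicit Types (g h : nat -> V) (x y : V).

Definition span_prefix (M : nat) g x := exists c : nat -> R[i], x = \sum_(k < M) c k *: g k.

Definition span_equiv g h := (forall i, in_span g (h i)) /\ (forall i, in_span h (g i)).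

Lemma span_prefix0 M g : span_prefix M g 0.
Proof. by exists (fun=> 0); rewrite big1 // => k _; rewrite scale0r. Qed.

Lemma span_prefix_gen M g k : (k < M)%N -> span_prefix M g (g k).
Proof.
move=> kM; exists (fun j => (j == k)%:R).
rewrite (bigD1 (Ordinal kM)) //= eqxx scale1r big1 ?addr0 // => j jk.
by rewrite -val_eqE /= in jk; rewrite (negbTE jk) scale0r.
Qed.

Lemma span_prefix_comb M g a b x y :
  span_prefix M g x -> span_prefix M g y -> span_prefix M g (a *: x + b *: y).
Proof.
move=> [c ->] [c' ->]; exists (fun k => a * c k + b * c' k).
rewrite !scaler_sumr -big_split /=; apply: eq_bigr => k _.
by rewrite scalerDl !scalerA.
Qed.

Lemma span_prefix_trans M M' g h x :
  (forall k, (k < M)%N -> span_prefix M' g (h k)) -> span_prefix M h x -> span_prefix M' g x.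
Proof.
move=> hg [c ->]; elim: M c hg => [|M IH] c hg; first by rewrite big_ord0; apply: span_prefix0.
rewrite big_ord_recr /= -[X in X + _]scale1r.
by apply: span_prefix_comb; [apply: IH => k kM; apply: hg; lia|apply: hg].
Qed.

Lemma span_prefix_ext M g h x :
  (forall k, (k < M)%N -> g k = h k) -> span_prefix M g x -> span_prefix M h x.
Proof. by move=> gh [c ->]; exists c; apply: eq_bigr => k _; rewrite gh. Qed.

Lemma in_span_gen g k : in_span g (g k).
Proof. by exists k.+1; apply: span_prefix_gen. Qed.

Lemma in_span_comb g a b x y : in_span g x -> in_span g y -> in_span g (a *: x + b *: y).
Proof.
move=> [M hx] [M' hy]; exists (maxn M M').
have le_max N : (N <= maxn M M')%N -> forall z, span_prefix N g z -> span_prefix (maxn M M') g z.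
  by move=> le z; apply: span_prefix_trans => k kN; apply: span_prefix_gen; lia.
by apply: span_prefix_comb; apply: le_max hx || apply: le_max hy; lia.
Qed.

Lemma in_span_trans g h x : (forall k, in_span g (h k)) -> in_span h x -> in_span g x.
Proof.
move=> hg [M [c ->]]; elim: M c => [|M IH] c.
  by rewrite big_ord0; exists 0%N; apply: span_prefix0.
by rewrite big_ord_recr /= -[X in X + _]scale1r; apply: in_span_comb.
Qed.

Lemma span_equiv_trans g h k : span_equiv g h -> span_equiv h k -> span_equiv g k.
Proof.
move=> [gh hg] [hk kh]; split=> i; first exact: in_span_trans (hk i).
exact: in_span_trans (hg i).
Qed.

Lemma in_cspan_span_equiv (ip : V -> V -> R[i]) g h x :
  span_equiv g h -> in_cspan ip g x <-> in_cspan ip h x.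
Proof.
have sub g' h' : (forall i, in_span h' (g' i)) -> in_cspan ip g' x -> in_cspan ip h' x.
  move=> g'h' cg eps eps0; have [y [gy xy]] := cg eps eps0.
  by exists y; split=> //; apply: in_span_trans gy.
by move=> [gh hg]; split; apply: sub.
Qed.

End Span.

Section Frames.
Variables (R : realType) (V : lmodType R[i]) (ip : V -> V -> R[i]).
Variables (D : V -> Prop) (E : V -> V).
Hypothesis ipL : forall a x y z, ip (a *: x + y) z = a * ip x z + ip y z.
Hypothesis ipC : forall x y, ip x y = (ip y x)^*.
Hypothesis D0 : D 0.
Hypothesis DL : forall a x y, D x -> D y -> D (a *: x + y).
Hypothesis E_sym : symmetric_operator ip D E.

Let ip0l z : ip 0 z = 0.
Proof.
have := ipL 1 0 0 z; rewrite scale1r addr0 mul1r => h.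
by apply: (addrI (ip 0 z)); rewrite addr0 -h.
Qed.

Let ipDl x y z : ip (x + y) z = ip x z + ip y z.
Proof. by have := ipL 1 x y z; rewrite scale1r mul1r. Qed.

Let ipZl a x z : ip (a *: x) z = a * ip x z.
Proof. by have := ipL a x 0 z; rewrite addr0 ip0l addr0. Qed.

Let ipDr x y z : ip z (x + y) = ip z x + ip z y.
Proof. by rewrite ipC ipDl rmorphD /= -!ipC. Qed.

Let ipZr a x z : ip z (a *: x) = a^* * ip z x.
Proof. by rewrite ipC ipZl rmorphM /= -ipC. Qed.

Let D_comb a b x y : D x -> D y -> D (a *: x + b *: y).
Proof. by move=> Dx Dy; apply: DL => //; rewrite -[_ *: y]addr0; apply: DL. Qed.

Let E_comb a b x y : D x -> D y -> E (a *: x + b *: y) = a *: E x + b *: E y.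
Proof.
have [EL _] := E_sym.
have E0 : E 0 = 0.
  have := EL 1 0 0 D0 D0; rewrite !scale1r addr0 => h.
  by apply: (addrI (E 0)); rewrite addr0 -h.
move=> Dx Dy; rewrite EL //; last by rewrite -[_ *: y]addr0; apply: DL.
by rewrite -[_ *: y]addr0 EL // E0 !addr0.
Qed.

Lemma ip_comb u v a b c e : ip u u = 1 -> ip v v = 1 -> ip u v = 0 ->
  ip (a *: u + b *: v) (c *: u + e *: v) = a * c^* + b * e^*.
Proof.
move=> uu vv uv; have vu : ip v u = 0 by rewrite ipC uv conjC0.
by rewrite !ipDl !ipDr !ipZl !ipZr uu vv uv vu; ring.
Qed.

Lemma ip_comb_orth u v w a b : ip u w = 0 -> ip v w = 0 -> ip (a *: u + b *: v) w = 0.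
Proof. by move=> uw vw; rewrite ipDl !ipZl uw vw !mulr0 addr0. Qed.

Lemma ipE_comb u v a b c e : D u -> D v ->
  ip (E (a *: u + b *: v)) (c *: u + e *: v) =
  a * c^* * ip (E u) u + a * e^* * ip (E u) v
  + b * c^* * (ip (E u) v)^* + b * e^* * ip (E v) v.
Proof.
have [_ ES] := E_sym.
move=> Du Dv; have vu : ip (E v) u = (ip (E u) v)^* by rewrite ES // ipC -ES.
by rewrite E_comb // !ipDl !ipDr !ipZl !ipZr vu; ring.
Qed.

Definition diag_frame (dl : nat -> R) (g : nat -> V) :=
  [/\ orthonormal_seq ip g, forall i, D (g i)
    & forall i, ip (E (g i)) (g i) = (dl i)%:C].

Lemma eq_diag_frame dl dl' g : dl =1 dl' -> diag_frame dl g -> diag_frame dl' g.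
Proof. by move=> e [g_on g_D g_diag]; split=> // i; rewrite -e. Qed.

Lemma orthonormal_update (g : nat -> V) p q x y : orthonormal_seq ip g -> p != q ->
  ip x x = 1 -> ip y y = 1 -> ip x y = 0 ->
  (forall k, k != p -> k != q -> ip x (g k) = 0 /\ ip y (g k) = 0) ->
  orthonormal_seq ip [eta g with p |-> x, q |-> y].
Proof.
move=> g_on pq xx yy xy xyg; have qp : q != p by rewrite eq_sym.
have flip u w : ip u w = 0 -> ip w u = 0 by move=> uw; rewrite ipC uw conjC0.
have cases k : [\/ k = p, k = q | k != p /\ k != q].
  by case: (eqVneq k p) => [->|kp]; [apply: Or31|case: (eqVneq k q) => [->|kq]; [apply: Or32|apply: Or33]].
move=> i j /=.
case: (cases i) => [->|->|[ip_ iq]]; case: (cases j) => [->|->|[jp jq]];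
  rewrite ?eqxx ?(negbTE pq) ?(negbTE qp) ?(negbTE ip_) ?(negbTE iq) ?(negbTE jp) ?(negbTE jq) //=.
- by rewrite eq_sym (negbTE jp); case: (xyg j jp jq).
- exact: flip.
- by rewrite eq_sym (negbTE jq); case: (xyg j jp jq).
- by apply: flip; case: (xyg i ip_ iq).
- by apply: flip; case: (xyg i ip_ iq).
Qed.

Definition rot_step (dl : nat -> R) (g : nat -> V) (p q : nat) (c : R) : nat -> V :=
  let al := rot_cos (dl p) (dl q) c in
  let be := rot_sin (dl p) (dl q) c (ip (E (g p)) (g q)) in
  if p == q then g
  else [eta g with p |-> al *: g p + be *: g q, q |-> - be^* *: g p + al^* *: g q].

Definition diag_step (dl : nat -> R) (p q : nat) (c : R) : nat -> R :=
  if p == q then dl else [eta dl with p |-> c, q |-> dl p + dl q - c].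

Lemma rot_step_other dl g p q c i : i != p -> i != q -> rot_step dl g p q c i = g i.
Proof. by move=> ip_ iq; rewrite /rot_step; case: ifP => //= _; rewrite (negbTE ip_) (negbTE iq). Qed.

Lemma diag_step_other dl p q c i : i != p -> i != q -> diag_step dl p q c i = dl i.
Proof. by move=> ip_ iq; rewrite /diag_step; case: ifP => //= _; rewrite (negbTE ip_) (negbTE iq). Qed.

Lemma step_diag_frame dl g p q c : diag_frame dl g -> (p != q -> dl p <= c <= dl q) ->
  diag_frame (diag_step dl p q c) (rot_step dl g p q c).
Proof.
move=> [g_on g_D g_diag]; rewrite /diag_step /rot_step.
have [-> _|pq /(_ isT) between] := eqVneq p q; first by split.
set z := ip (E (g p)) (g q); set al := rot_cos _ _ _; set be := rot_sin _ _ _ _.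
have unit : al * al^* + be * be^* = 1 := rot_unitary z between.
have diag := rot_diag z between; rewrite /= -/al -/be in diag.
have gpp : ip (g p) (g p) = 1 by rewrite g_on eqxx.
have gqq : ip (g q) (g q) = 1 by rewrite g_on eqxx.
have gpq : ip (g p) (g q) = 0 by rewrite g_on (negbTE pq).
split.
- apply: orthonormal_update => //.
  + by rewrite ip_comb.
  + by rewrite ip_comb // !rmorphN /= !conjCK -unit; ring.
  + by rewrite ip_comb // rmorphN /= !conjCK; ring.
  + move=> k kp kq; have [gpk gqk] : ip (g p) (g k) = 0 /\ ip (g q) (g k) = 0.
      by rewrite !g_on eq_sym (negbTE kp) eq_sym (negbTE kq).
    by split; apply: ip_comb_orth.
- by move=> i /=; case: ifP => _; [|case: ifP => _]; try apply: D_comb; apply: g_D.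
- move=> i /=; case: ifP => _; first by rewrite ipE_comb // !g_diag.
  case: ifP => _; last exact: g_diag.
  rewrite ipE_comb // !g_diag rmorphB rmorphD /= -diag.
  set a := (dl p)%:C; set b := (dl q)%:C.
  transitivity ((a + b) * (al * al^* + be * be^*)
    - (al * al^* * a + al * be^* * z + be * al^* * z^* + be * be^* * b)).
    by rewrite !rmorphN /= !conjCK -/z; ring.
  by rewrite unit mulr1.
Qed.

Lemma rot_step_in_span dl g p q c i : in_span g (rot_step dl g p q c i).
Proof.
rewrite /rot_step; case: ifP => _ /=; first exact: in_span_gen.
by case: ifP => _; [|case: ifP => _]; try apply: in_span_comb; apply: in_span_gen.
Qed.

Lemma rot_step_span_prefix dl g p q c M k : (p != q -> dl p <= c <= dl q) ->
  (p < M)%N -> (q < M)%N -> (k < M)%N -> span_prefix M (rot_step dl g p q c) (g k).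
Proof.
move=> between pM qM kM.
have [pq|pq] := eqVneq p q; first by rewrite /rot_step pq eqxx; apply: span_prefix_gen.
have {}between := between pq.
pose al := rot_cos (dl p) (dl q) c.
pose be := rot_sin (dl p) (dl q) c (ip (E (g p)) (g q)).
have unit : al * al^* + be * be^* = 1 := rot_unitary _ between.
have step_p : rot_step dl g p q c p = al *: g p + be *: g q.
  by rewrite /rot_step (negbTE pq) /= eqxx.
have step_q : rot_step dl g p q c q = - be^* *: g p + al^* *: g q.
  by rewrite /rot_step (negbTE pq) /= eq_sym (negbTE pq) eqxx.
have comb u a b : u = a *: (al *: g p + be *: g q) + b *: (- be^* *: g p + al^* *: g q) ->
    span_prefix M (rot_step dl g p q c) u.
  by move=> ->; rewrite -step_p -step_q; apply: span_prefix_comb; apply: span_prefix_gen.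
have [-> | kp] := eqVneq k p.
  apply: (comb _ al^* (- be)).
  rewrite !scalerDr !scalerA addrACA -!scalerDl.
  have -> : al^* * al + - be * - be^* = 1 by rewrite -unit; ring.
  have -> : al^* * be + - be * al^* = 0 by ring.
  by rewrite scale1r scale0r addr0.
have [-> | kq] := eqVneq k q.
  apply: (comb _ be^* al).
  rewrite !scalerDr !scalerA addrACA -!scalerDl.
  have -> : be^* * al + al * - be^* = 0 by ring.
  have -> : be^* * be + al * al^* = 1 by rewrite -unit; ring.
  by rewrite scale1r scale0r add0r.
by rewrite -(rot_step_other dl g c kp kq); apply: span_prefix_gen.
Qed.

Section Process.
Variables (P Q : nat -> nat) (C dl0 : nat -> R) (g0 : nat -> V).

Fixpoint run (t : nat) : (nat -> R) * (nat -> V) :=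
  if t is s.+1 then
    let r := run s in
    (diag_step r.1 (P s) (Q s) (C s), rot_step r.1 r.2 (P s) (Q s) (C s))
  else (dl0, g0).

Local Notation diag t := (run t).1.
Local Notation frame t := (run t).2.

Lemma run_untouched i t t' : (t <= t')%N ->
  (forall s, (t <= s)%N -> (s < t')%N -> i != P s /\ i != Q s) ->
  diag t' i = diag t i /\ frame t' i = frame t i.
Proof.
elim: t' => [|t' IH] le untouched; first by have -> : t = 0%N by lia.
have [->//|lt] : t = t'.+1 \/ (t <= t')%N by lia.
have [iP iQ] := untouched t' lt (ltnSn t').
rewrite /= diag_step_other // rot_step_other //.
by apply: IH => // s ts st; apply: untouched; lia.
Qed.

Lemma run_diag_P t : P t != Q t -> diag t.+1 (P t) = C t.
Proof. by move=> PQ; rewrite /= /diag_step (negbTE PQ) /= eqxx. Qed.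

Lemma run_diag_Q t : P t != Q t -> diag t.+1 (Q t) = diag t (P t) + diag t (Q t) - C t.
Proof. by move=> PQ; rewrite /= /diag_step (negbTE PQ) /= eq_sym (negbTE PQ) eqxx. Qed.

Lemma run_idle t : P t = Q t -> run t.+1 = run t.
Proof. by move=> PQ; rewrite /= /diag_step /rot_step PQ eqxx; case: (run t). Qed.

Hypothesis frame0 : diag_frame dl0 g0.
Hypothesis run_between : forall t, P t != Q t -> diag t (P t) <= C t <= diag t (Q t).
Hypothesis P_ge : forall t, (t <= P t)%N.
Hypothesis Q_ge : forall t, (t <= Q t)%N.
(* No step pairs an index below [M] with one above, so every step preserves
   the span of the first [M] vectors. *)
Hypothesis cut : forall k, exists2 M, (k < M)%N & forall t, (P t < M)%N = (Q t < M)%N.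

(* By [P_ge] and [Q_ge], index [i] is never moved after step [i]. *)
Definition limit_diag i := diag i.+1 i.
Definition limit_frame i := frame i.+1 i.

Lemma run_limit i t : (i < t)%N -> diag t i = limit_diag i /\ frame t i = limit_frame i.
Proof.
move=> it; apply: run_untouched => // s si _.
by split; apply/eqP; [have := P_ge s|have := Q_ge s]; lia.
Qed.

Lemma run_diag_frame t : diag_frame (diag t) (frame t).
Proof. by elim: t => [|t IH] //=; apply: step_diag_frame IH (@run_between t). Qed.

Lemma limit_diag_frame : diag_frame limit_diag limit_frame.
Proof.
split=> [i j|i|i]; last 2 first.
- by have [_ D_frame _] := run_diag_frame i.+1; apply: D_frame.
- by have [_ _ frame_diag] := run_diag_frame i.+1; apply: frame_diag.
have [iT jT] : (i < (maxn i j).+1)%N /\ (j < (maxn i j).+1)%N by lia.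
have [on _ _] := run_diag_frame (maxn i j).+1.
by rewrite -(run_limit iT).2 -(run_limit jT).2 on.
Qed.

Lemma limit_span_equiv : span_equiv g0 limit_frame.
Proof.
split=> [i|k].
  suff: forall t j, in_span g0 (frame t j) by apply.
  elim=> [|t IH] j; first exact: in_span_gen.
  exact: in_span_trans IH (rot_step_in_span _ _ _ _ _ _).
have [M kM cutM] := cut k.
suff prefix t j : (j < M)%N -> span_prefix M (frame t) (g0 j).
  by exists M; apply: span_prefix_ext (prefix M k kM) => j jM; rewrite (run_limit jM).2.
elim: t j => [|t IH] j jM; first exact: span_prefix_gen.
have [PM|PM] := boolP (P t < M)%N.
  have QM : (Q t < M)%N by rewrite -cutM.
  apply: span_prefix_trans (IH j jM) => i iM.
  exact: rot_step_span_prefix (@run_between t) PM QM iM.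
have QM : ~~ (Q t < M)%N by rewrite -cutM.
by apply: span_prefix_ext (IH j jM) => i iM /=; rewrite rot_step_other //; apply/eqP; lia.
Qed.

Lemma limit_diag_untouched i : (forall s, i != P s /\ i != Q s) -> limit_diag i = dl0 i.
Proof. by move=> untouched; apply: (run_untouched (leq0n _) _).1 => s _ _. Qed.

Lemma limit_diag_once i t : (forall s, s != t -> i != P s /\ i != Q s) ->
  limit_diag i = diag t.+1 i /\ diag t i = dl0 i.
Proof.
move=> untouched; have iT : (i < (maxn i t).+1)%N by lia.
split; last by apply: (run_untouched (leq0n _) _).1 => s _ st; apply: untouched; lia.
rewrite -(run_limit iT).1; apply: (run_untouched _ _).1 => [|s ts _]; first lia.
by apply: untouched; lia.
Qed.

End Process.

Section Transfer.
Variables (m : nat -> nat) (tau dl : nat -> R) (g : nat -> V).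
Hypothesis m_incr : forall j, (m j < m j.+1)%N.
Hypothesis g_frame : diag_frame dl g.
Hypothesis tau_ge0 : forall t, 0 <= tau t.
Hypothesis tau_room : forall t, dl (m (2 * t)) + tau t <= dl (m (2 * t).+1).

Let P t := m (2 * t).
Let Q t := m (2 * t).+1.
Let C t := dl (P t) + tau t.

Let m_inj : injective m.
Proof. exact/incn_inj/incr_leq_mono. Qed.

Let P_untouched t s : s != t -> P t != P s /\ P t != Q s.
Proof. by move=> st; rewrite /P /Q !(inj_eq m_inj); split; lia. Qed.

Let Q_untouched t s : s != t -> Q t != P s /\ Q t != Q s.
Proof. by move=> st; rewrite /P /Q !(inj_eq m_inj); split; lia. Qed.

Let P_ge t : (t <= P t)%N.
Proof. by have := incr_geq m_incr (2 * t); rewrite /P; lia. Qed.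

Let Q_ge t : (t <= Q t)%N.
Proof. by have := incr_geq m_incr (2 * t).+1; rewrite /Q; lia. Qed.

Let run_start t : (run P Q C dl g t).1 (P t) = dl (P t) /\ (run P Q C dl g t).1 (Q t) = dl (Q t).
Proof.
by split; apply: (run_untouched C dl g (leq0n _) _).1 => s _ st;
  [apply: P_untouched|apply: Q_untouched]; lia.
Qed.

Let PQ_neq t : P t != Q t.
Proof. by rewrite /P /Q (inj_eq m_inj); lia. Qed.

Lemma transfer_pairs : exists dl' g', [/\ diag_frame dl' g', span_equiv g g',
    forall t, dl' (m (2 * t)) = dl (m (2 * t)) + tau t,
    forall t, dl' (m (2 * t).+1) = dl (m (2 * t).+1) - tau t
  & forall i, (forall j, m j != i) -> dl' i = dl i].
Proof.
have between t : P t != Q t ->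
    (run P Q C dl g t).1 (P t) <= C t <= (run P Q C dl g t).1 (Q t).
  by have [-> ->] := run_start t; have := tau_ge0 t; have := tau_room t; rewrite /C /P /Q; lra.
have cut k : exists2 M, (k < M)%N & forall t, (P t < M)%N = (Q t < M)%N.
  exists (Q k).+1; first by have := Q_ge k; lia.
  by move=> t; rewrite /P /Q !ltnS !(incr_leq_mono m_incr); lia.
exists (limit_diag P Q C dl g), (limit_frame P Q C dl g); split.
- exact: limit_diag_frame.
- exact: limit_span_equiv.
- move=> t; have [-> _] := limit_diag_once C dl g P_ge Q_ge (@P_untouched t).
  by rewrite run_diag_P.
- move=> t; have [-> _] := limit_diag_once C dl g P_ge Q_ge (@Q_untouched t).
  by rewrite run_diag_Q // (run_start t).1 (run_start t).2 /C /P; ring.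
- move=> i off; apply: limit_diag_untouched => // s.
  by split; apply/eqP => e; [move: (off (2 * s)%N)|move: (off (2 * s).+1)]; rewrite e eqxx.
Qed.

End Transfer.

(* A single chain of transfers [n j.+1 -> n j] would break [cut]; two passes
   over disjoint pairs do not. *)
Lemma transfer_chain (n : nat -> nat) (T lam : nat -> R) (f : nat -> V) :
  (forall j, (n j < n j.+1)%N) -> diag_frame lam f -> (forall j, 0 <= T j) ->
  (forall j, lam (n j) + T j <= lam (n j.+1)) ->
  exists dl g, [/\ diag_frame dl g, span_equiv f g,
    forall i, (forall j, n j != i) -> dl i = lam i
  & forall j, dl (n j) = lam (n j) + T j - (if j is j'.+1 then T j' else 0)].
Proof.
move=> n_incr f_frame T_ge0 T_room.
have [dlA [gA [A_frame f_A A_up A_down A_off]]] :=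
  transfer_pairs (tau := fun t => T (2 * t)%N) n_incr f_frame (fun t => T_ge0 _) (fun t => T_room _).
have two_succ t : (2 * t).+2 = (2 * t.+1)%N by lia.
have room t : dlA (n (2 * t).+1) + T (2 * t).+1 <= dlA (n (2 * t).+2).
  rewrite A_down two_succ A_up -two_succ.
  by have := T_room (2 * t).+1; have := T_ge0 (2 * t); have := T_ge0 (2 * t).+2; lra.
have [dlB [gB [B_frame A_B B_up B_down B_off]]] :=
  transfer_pairs (m := fun j => n j.+1) (tau := fun t => T (2 * t).+1)
    (fun j => n_incr j.+1) A_frame (fun t => T_ge0 _) room.
rewrite /= in B_up B_down B_off.
have n_inj : injective n := incn_inj (incr_leq_mono n_incr).
exists dlB, gB; split=> // [|i off|[|j]].
- exact: span_equiv_trans f_A A_B.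
- by rewrite B_off ?A_off // => j; apply: off.
- rewrite B_off; last by move=> j; rewrite (inj_eq n_inj).
  by have := A_up 0; rewrite muln0 => ->; rewrite subr0.
have [t [-> | ->]] := even_or_odd j.
  by rewrite B_up A_down; ring.
by rewrite B_down two_succ A_up; ring.
Qed.

Section Spreading.
Variables (d lam dl : nat -> R) (n : nat -> nat) (g : nat -> V).
Hypothesis n_incr : forall j, (n j < n j.+1)%N.
Hypothesis d_mono : nondecreasing_seq d.
Hypothesis lam_le_d : forall i, lam i <= d i.
Hypothesis g_frame : diag_frame dl g.
Hypothesis dl_off : forall i, (forall j, n j != i) -> dl i = lam i.
Hypothesis dl_on : forall j,
  dl (n j) = lam (n j) + excess d lam (n j).+1 - excess d lam (block_start n j).

Let Q t := n (block n_incr t).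
Let spread t := run id Q d dl g t.

Let P_ge t : (t <= id t)%N. Proof. exact: leqnn. Qed.
Let Q_ge t : (t <= Q t)%N. Proof. exact: leq_n_block. Qed.

Let spread_self t : t != Q t -> (spread t).1 t = lam t.
Proof.
move=> t_end; have off := notin_range t_end.
rewrite (run_untouched d dl g (leq0n t) _).1 /=; first exact: dl_off.
by move=> s _ st; split; [apply/eqP; rewrite /=; lia|rewrite eq_sym; apply: off].
Qed.

(* When step [t] starts, the block end [Q t] has already handed [d s - lam s]
   to every earlier index [s] of its block. *)
Let spread_invariant t :
  (spread t).1 (Q t) = lam (Q t) + excess d lam (Q t).+1 - excess d lam t.
Proof.
elim: t => [|t IH].
  have b0 : block n_incr 0 = 0%N by apply/eqP; rewrite -leqn0 block_leq.
  by rewrite /spread /= /Q b0 dl_on.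
have [t_end|t_in] := eqVneq t (Q t); last first.
  rewrite /Q block_succ // -/(Q t) /spread run_diag_Q // -/(spread t) IH spread_self //.
  by rewrite (excessS d lam t); ring.
have b1 : block n_incr t.+1 = (block n_incr t).+1 by rewrite {1}t_end /Q block_succ_n.
rewrite /Q b1 (run_untouched d dl g (leq0n _) _).1 /= ?dl_on /= -/(Q t) -?t_end // => s _ st.
have below u : (u <= t)%N -> n (block n_incr t).+1 != u.
  by move=> ut; rewrite neq_ltn (leq_ltn_trans ut) ?orbT // {1}t_end n_incr.
split; apply: below; first by [].
by rewrite {1}t_end /Q (incr_leq_mono n_incr) block_leq -/(Q t) -t_end.
Qed.

Let spread_between t : id t != Q t -> (spread t).1 (id t) <= d t <= (spread t).1 (Q t).
Proof.
move=> t_end; rewrite /= spread_self // spread_invariant lam_le_d excessS /=.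
by have := d_mono (Q_ge t); have := excess_mono lam_le_d (Q_ge t); lra.
Qed.

Let spread_cut k : exists2 M, (k < M)%N & forall t, (id t < M)%N = (Q t < M)%N.
Proof.
exists (Q k).+1; first by rewrite ltnS Q_ge.
by move=> t; rewrite /Q /= !ltnS -block_leq (incr_leq_mono n_incr).
Qed.

Lemma spread_blocks : exists2 e, diag_frame d e & span_equiv g e.
Proof.
exists (limit_frame id Q d dl g); last exact: limit_span_equiv.
apply: (eq_diag_frame _ (limit_diag_frame g_frame spread_between P_ge Q_ge)) => i.
have [i_end|i_in] := eqVneq i (Q i); last exact: run_diag_P.
rewrite /limit_diag run_idle //; have := spread_invariant i; rewrite -i_end excessS => ->.
ring.
Qed.

End Spreading.

End Frames.

Local Open Scope complex_scope.

Theorem lemma4p1 (R : realType) (V : lmodType R[i]) (ip : V -> V -> R[i])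
  (D : V -> Prop) (E : V -> V) (d lam : nat -> R) (f : nat -> V) :
  is_hilbert ip ->
  dense_subspace ip D ->
  symmetric_operator ip D E ->
  nondecreasing_seq d -> unbounded_seq d ->
  nondecreasing_seq lam -> unbounded_seq lam ->
  (forall i : nat, lam i <= d i) ->
  orthonormal_seq ip f ->
  (forall i : nat, D (f i)) ->
  (forall i : nat, ip (E (f i)) (f i) = (lam i)%:C) ->
  exists e : nat -> V,
    [/\ orthonormal_seq ip e,
        (forall i : nat, in_span f (e i)),
        (forall x : V, in_cspan ip e x <-> in_cspan ip f x)
      & (forall i : nat, ip (E (e i)) (e i) = (d i)%:C)].
Proof.
move=> [ipL ipC _ _ _] [D0 DL _] E_sym d_mono _ lam_mono lam_unb lam_le_d f_on f_D f_diag.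
pose T i := excess d lam i.+1.
have T_ge0 i : 0 <= T i by apply: excess_ge0.
pose n := sparse T lam_unb.
have n_incr : forall j, (n j < n j.+1)%N := sparse_incr lam_unb lam_mono T_ge0.
have [dl [g [g_frame f_g dl_off dl_on]]] :=
  transfer_chain ipL ipC D0 DL E_sym (T := T \o n) n_incr (And3 f_on f_D f_diag)
    (fun j => T_ge0 _) (fun j => ltW (sparse_gap T lam_unb j)).
have dl_on' j : dl (n j) = lam (n j) + excess d lam (n j).+1 - excess d lam (block_start n j).
  by rewrite dl_on; case: j => [|j]; rewrite /= ?excess0.
have [e e_frame g_e] := spread_blocks ipL ipC D0 DL E_sym n_incr d_mono lam_le_d g_frame dl_off dl_on'.
have [e_on _ e_diag] := e_frame; have f_e := span_equiv_trans f_g g_e.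
exists e; split=> // [i|x]; first exact: f_e.1.
exact: iff_sym (in_cspan_span_equiv ip x f_e).
Qed.
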